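(* Let $k\ge1$, $\alpha\in\mathbb Z$ with $(\alpha,k)=1$, and $p_1,p_2,p_3\in\mathbb Z$. Then $$A(p_1,p_2,p_3;\alpha;k)=k\sum_{f\mid(p_2,p_3,k)}f\,S\Big(p_1\overline{\alpha},\frac{p_2p_3}{f^2};\frac kf\Big),$$ where $\overline\alpha$ denotes an inverse of $\alpha$ modulo $k/f$.
   Context: $A(p_1,p_2,p_3;\alpha;k)=\sum_{x_1,x_2,x_3\bmod k}e\big(\frac{x_1x_2x_3\alpha-x_1p_1-x_2p_2-x_3p_3}{k}\big)$, $e(x)=e^{2\pi ix}$; $S(a,b;c)=\sum_{u\bmod c,(u,c)=1}e\big(\frac{au+b\bar u}{c}\big)$ is the Kloosterman sum; $(p_2,p_3,k)$ is the gcd (with $(0,0,k)=k$). *)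

From Stdlib Require Import Reals ZArith List.
Import ListNotations.
Open Scope R_scope.

(* complex numbers as (real part, imaginary part) *)
Definition C : Type := (R * R)%type.
Definition C0 : C := (0, 0).
Definition Cadd (z w : C) : C := (fst z + fst w, snd z + snd w).
Definition Cscale (r : R) (z : C) : C := (r * fst z, r * snd z).

Definition e (x : R) : C := (cos (2 * PI * x), sin (2 * PI * x)).

Definition Csum (l : list Z) (F : Z -> C) : C :=
  fold_right (fun x acc => Cadd (F x) acc) C0 l.

Definition residues (k : Z) : list Z := map Z.of_nat (seq 0 (Z.to_nat k)).

Definition A (p1 p2 p3 alpha k : Z) : C :=
  Csum (residues k) (fun x1 =>
  Csum (residues k) (fun x2 =>
  Csum (residues k) (fun x3 =>
    e (IZR (x1 * x2 * x3 * alpha - x1 * p1 - x2 * p2 - x3 * p3) / IZR k)))).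

(* an inverse of u modulo c (the least one in 0..c-1; 0 if none exists) *)
Definition invmod (u c : Z) : Z :=
  match find (fun v => Z.eqb ((u * v - 1) mod c) 0) (residues c) with
  | Some v => v
  | None => 0%Z
  end.

Definition S (a b c : Z) : C :=
  Csum (filter (fun u => Z.eqb (Z.gcd u c) 1) (residues c))
       (fun u => e (IZR (a * u + b * invmod u c) / IZR c)).

Definition pos_divisors (g : Z) : list Z :=
  filter (fun f => Z.eqb (g mod f) 0) (map Z.of_nat (seq 1 (Z.to_nat g))).

Definition gcd3 (a b c : Z) : Z := Z.gcd (Z.gcd a b) c.

(* Summing over [x3] turns [A] into [k] times a sum over the solutions of
   [alpha x1 x2 = p3 (mod k)].  Group [x1] by [f = gcd(x1, k)], [x1 = f u] with
   [u] a unit mod [a = k/f].  Writing [x2 = r + a j], the sum over [j] vanishes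
   unless [f | p2], the congruence forces [f | p3] and then has the unique
   solution [r = (p3/f) (alpha u)^-1 mod a], contributing
   [f e(-(p2 p3/f^2) (alpha u)^-1 / a)].  The substitution [v = -alpha u]
   turns the remaining sum over [u] into [S(p1 alphabar, p2 p3/f^2; a)]. *)

From Stdlib Require Import Reals ZArith List Lia Lra Permutation Znumtheory.
From Coquelicot Require Import Complex.
From Pilot Require Import Defs.
Open Scope R_scope.

(* [ring] reads the carrier off the type of the left-hand side, which for a
   variable is [Defs.C]; adding [0] puts both sides at Coquelicot's [C]. *)
Lemma C_eq_of_plus_0 (z w : Complex.C) : Cplus z (RtoC 0) = Cplus w (RtoC 0) -> z = w.
Proof. now rewrite !Cplus_0_r. Qed.

Ltac C_ring := change C0 with (RtoC 0) in *; apply C_eq_of_plus_0; ring.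

Lemma Cscale_RtoC (r : R) (z : Defs.C) : Cscale r z = Cmult (RtoC r) z.
Proof. destruct z; unfold Cscale, Cmult, RtoC; cbn [fst snd]; f_equal; ring. Qed.

Section Csum.
Implicit Types (l : list Z) (F G : Z -> Defs.C).

Lemma Csum_nil F : Csum nil F = RtoC 0.
Proof. reflexivity. Qed.

Lemma Csum_cons x l F : Csum (x :: l) F = Cplus (F x) (Csum l F).
Proof. reflexivity. Qed.

Lemma Csum_app l l' F : Csum (l ++ l') F = Cplus (Csum l F) (Csum l' F).
Proof.
  induction l as [|x l IH]; cbn [app]; rewrite ?Csum_cons, ?Csum_nil, ?IH; C_ring.
Qed.

Lemma Csum_ext l F G : (forall x, In x l -> F x = G x) -> Csum l F = Csum l G.
Proof.
  induction l as [|x l IH]; intros H; [reflexivity|].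
  rewrite !Csum_cons, H, IH by (now left || (intros; apply H; now right)). reflexivity.
Qed.

Lemma Csum_map (g : Z -> Z) l F : Csum (map g l) F = Csum l (fun x => F (g x)).
Proof. induction l as [|x l IH]; [reflexivity|]. cbn [map]. now rewrite !Csum_cons, IH. Qed.

Lemma Csum_flat_map (g : Z -> list Z) l F :
  Csum (flat_map g l) F = Csum l (fun x => Csum (g x) F).
Proof.
  induction l as [|x l IH]; [reflexivity|].
  cbn [flat_map]. now rewrite Csum_app, IH, Csum_cons.
Qed.

Lemma Csum_filter (P : Z -> bool) l F :
  Csum (filter P l) F = Csum l (fun x => if P x then F x else C0).
Proof.
  induction l as [|x l IH]; [reflexivity|].
  cbn [filter]. rewrite Csum_cons. destruct (P x); rewrite ?Csum_cons, IH; C_ring.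
Qed.

Lemma Csum_Permutation l l' F : Permutation l l' -> Csum l F = Csum l' F.
Proof.
  induction 1; rewrite ?Csum_cons; try congruence; C_ring.
Qed.

Lemma Csum_mult_l z l F : Cmult z (Csum l F) = Csum l (fun x => Cmult z (F x)).
Proof. induction l as [|x l IH]; rewrite ?Csum_cons, ?Csum_nil, <- ?IH; C_ring. Qed.

Lemma Csum_zero l F : (forall x, In x l -> F x = RtoC 0) -> Csum l F = RtoC 0.
Proof.
  induction l as [|x l IH]; intros H; [reflexivity|].
  rewrite Csum_cons, H, IH by (now left || (intros; apply H; now right)). C_ring.
Qed.

Lemma Csum_const l c : Csum l (fun _ => c) = Cmult (RtoC (INR (length l))) c.
Proof.
  induction l as [|x l IH]; cbn [length].
  - rewrite Csum_nil. change (INR 0) with 0. C_ring.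
  - rewrite Csum_cons, IH, S_INR, RtoC_plus. C_ring.
Qed.

Lemma Csum_indicator l x0 F : NoDup l -> In x0 l ->
  Csum l (fun x => if x =? x0 then F x else C0)%Z = F x0.
Proof.
  induction l as [|x l IH]; intros Hnd Hin; [destruct Hin|].
  inversion Hnd as [|? ? Hx Hl]; subst. rewrite Csum_cons.
  destruct (Z.eqb_spec x x0) as [<-|Hne].
  - rewrite Csum_zero; [C_ring|]. intros y Hy.
    destruct (Z.eqb_spec y x); [congruence|reflexivity].
  - destruct Hin as [|Hin]; [congruence|]. rewrite IH; auto. C_ring.
Qed.

End Csum.

Lemma e_add x y : e (x + y) = Cmult (e x) (e y).
Proof.
  unfold e, Cmult; cbn [fst snd].
  rewrite Rmult_plus_distr_l, cos_plus, sin_plus. f_equal; ring.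
Qed.

Lemma e_INR n : e (INR n) = RtoC 1.
Proof.
  unfold e, RtoC. replace (2 * PI * INR n) with (0 + 2 * INR n * PI) by ring.
  now rewrite cos_period, sin_period, cos_0, sin_0.
Qed.

Lemma e_IZR n : e (IZR n) = RtoC 1.
Proof.
  destruct (Z_le_gt_dec 0 n) as [Hn|Hn].
  - rewrite <- (Z2Nat.id n), <- INR_IZR_INZ by lia. apply e_INR.
  - (* [e (-m) * e m = e 0] with [e m = 1] *)
    assert (H0 : e (IZR n + IZR (- n)) = RtoC 1).
    { rewrite <- plus_IZR, Z.add_opp_diag_r. apply (e_INR 0). }
    rewrite e_add in H0. rewrite <- (Z2Nat.id (- n)), <- INR_IZR_INZ, e_INR in H0 by lia.
    rewrite <- H0. C_ring.
Qed.

Definition e_frac (n k : Z) : Defs.C := e (IZR n / IZR k).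

Lemma e_frac_add a b k : e_frac (a + b) k = Cmult (e_frac a k) (e_frac b k).
Proof. unfold e_frac. rewrite <- e_add, plus_IZR. f_equal. unfold Rdiv. ring. Qed.

Lemma e_frac_mod n k : (0 < k)%Z -> e_frac n k = e_frac (n mod k) k.
Proof.
  intros Hk. rewrite (Z_div_mod_eq_full n k) at 1.
  rewrite Z.add_comm, e_frac_add. unfold e_frac at 2.
  replace (IZR (k * (n / k)) / IZR k) with (IZR (n / k))
    by (rewrite mult_IZR; field; apply not_0_IZR; lia).
  rewrite e_IZR. C_ring.
Qed.

Lemma e_frac_congr a b k : (0 < k)%Z -> (a mod k = b mod k)%Z -> e_frac a k = e_frac b k.
Proof. intros Hk H. now rewrite (e_frac_mod a), (e_frac_mod b), H. Qed.

Lemma e_frac_mul_r n k f : (0 < f)%Z -> (0 < k)%Z -> e_frac (n * f) (k * f) = e_frac n k.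
Proof.
  intros Hf Hk. unfold e_frac. f_equal.
  rewrite !mult_IZR. field. split; apply not_0_IZR; lia.
Qed.

Lemma e_frac_0 k : e_frac 0 k = RtoC 1.
Proof. unfold e_frac. unfold Rdiv. rewrite Rmult_0_l. apply (e_IZR 0). Qed.

Lemma cos_lt_1 x : 0 < x < 2 * PI -> cos x < 1.
Proof.
  intros [H0 H2PI]. pose proof PI_RGT_0. destruct (Rle_lt_dec x PI).
  - rewrite <- cos_0. apply cos_decreasing_1; lra.
  - rewrite <- cos_2PI. apply cos_increasing_1; lra.
Qed.

Lemma e_frac_neq_1 n k : (0 < k)%Z -> (n mod k <> 0)%Z -> e_frac n k <> RtoC 1.
Proof.
  intros Hk Hn. rewrite e_frac_mod by exact Hk.
  assert (Hr := Z.mod_pos_bound n k Hk).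
  assert (Hq : 0 < IZR (n mod k) / IZR k < 1).
  { assert (0 < IZR k) by (apply IZR_lt; lia). split.
    - apply Rdiv_lt_0_compat; auto. apply IZR_lt; lia.
    - apply Rmult_lt_reg_r with (IZR k); auto.
      field_simplify; [apply IZR_lt; lia | lra]. }
  unfold e_frac, e, RtoC. intros Heq. injection Heq as Hcos _.
  pose proof PI_RGT_0.
  assert (cos (2 * PI * (IZR (n mod k) / IZR k)) < 1) by (apply cos_lt_1; nra).
  lra.
Qed.

Open Scope Z_scope.

Lemma Z_mod_eq_iff_divide a x y : a <> 0 -> (x mod a = y mod a <-> (a | x - y)).
Proof.
  intros Ha. split.
  - intros H. rewrite (Z_div_mod_eq_full x a), (Z_div_mod_eq_full y a), H.
    exists (x / a - y / a). ring.
  - intros [t Ht]. replace x with (y + t * a) by lia. now apply Z.mod_add.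
Qed.

Lemma Z_gcd_1_iff_inverse a x : 1 <= a ->
  (Z.gcd x a = 1 <-> exists y, (x * y) mod a = 1 mod a).
Proof.
  intros Ha. split.
  - intros H. apply Z.gcd_bezout in H as [s [t H]]. exists s.
    apply Z_mod_eq_iff_divide; [lia|]. exists (- t). lia.
  - intros [y H]. apply Z_mod_eq_iff_divide in H as [t Ht]; [|lia].
    apply Z.bezout_1_gcd. exists y, (- t). lia.
Qed.

Lemma Z_gcd_pos_r a b : 0 < b -> 0 < Z.gcd a b.
Proof. intros Hb. pose proof (Z.gcd_nonneg a b). pose proof (Z.gcd_eq_0 a b). lia. Qed.

Lemma Z_gcd_1_mul a x y : Z.gcd x a = 1 -> Z.gcd y a = 1 -> Z.gcd (x * y) a = 1.
Proof.
  intros Hx Hy. rewrite Z.gcd_comm in *. apply Zgcd_1_rel_prime.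
  apply rel_prime_mult; now apply Zgcd_1_rel_prime.
Qed.

Lemma In_residues k x : In x (residues k) <-> 0 <= x < k.
Proof.
  unfold residues. rewrite in_map_iff. split.
  - intros [n [<- Hn]]. apply in_seq in Hn. lia.
  - intros H. exists (Z.to_nat x). split; [lia|]. apply in_seq. lia.
Qed.

Lemma NoDup_residues k : NoDup (residues k).
Proof.
  apply FinFun.Injective_map_NoDup; [intros x y; lia | apply seq_NoDup].
Qed.

Lemma length_residues k : length (residues k) = Z.to_nat k.
Proof. unfold residues. now rewrite length_map, length_seq. Qed.

Lemma invmod_spec u c : 1 <= c -> Z.gcd u c = 1 -> (u * invmod u c) mod c = 1 mod c.
Proof.
  intros Hc Hu. unfold invmod.
  destruct (find (fun v => (u * v - 1) mod c =? 0) (residues c)) eqn:Hfind.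
  - apply find_some in Hfind as [_ H]. apply Z.eqb_eq, Z.mod_divide in H; [|lia].
    now apply Z_mod_eq_iff_divide; [lia|].
  - exfalso. apply Z_gcd_1_iff_inverse in Hu as [y Hy]; [|exact Hc].
    assert (Hnone := find_none _ _ Hfind (y mod c)).
    rewrite In_residues, Z.eqb_neq in Hnone. apply Hnone; [apply Z.mod_pos_bound; lia|].
    now rewrite Zminus_mod, Zmult_mod_idemp_r, Hy, Z.sub_diag.
Qed.

Definition reduced_residues (a : Z) : list Z :=
  filter (fun u => Z.gcd u a =? 1) (residues a).

Lemma In_reduced_residues a u : In u (reduced_residues a) <-> 0 <= u < a /\ Z.gcd u a = 1.
Proof. unfold reduced_residues. now rewrite filter_In, In_residues, Z.eqb_eq. Qed.

Lemma NoDup_reduced_residues a : NoDup (reduced_residues a).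
Proof. apply NoDup_filter, NoDup_residues. Qed.

Lemma In_pos_divisors g f : In f (pos_divisors g) <-> 1 <= f <= g /\ (f | g).
Proof.
  unfold pos_divisors. rewrite filter_In, in_map_iff, Z.eqb_eq. split.
  - intros [[n [<- Hn]] H]. apply in_seq in Hn. split; [lia|].
    apply Z.mod_divide; [lia | exact H].
  - intros [Hf Hg]. split; [|apply Z.mod_divide; [lia | exact Hg]].
    exists (Z.to_nat f). split; [lia|]. apply in_seq. lia.
Qed.

Lemma NoDup_pos_divisors g : NoDup (pos_divisors g).
Proof.
  apply NoDup_filter, FinFun.Injective_map_NoDup; [intros x y; lia | apply seq_NoDup].
Qed.

Lemma Permutation_map_injective_in (g : Z -> Z) l : NoDup l ->
  (forall x, In x l -> In (g x) l) ->
  (forall x y, In x l -> In y l -> g x = g y -> x = y) -> Permutation (map g l) l.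
Proof.
  intros Hnd Hin Hinj. apply Permutation_map_same_l.
  - now apply FinFun.Injective_map_NoDup_in.
  - intros y Hy. apply in_map_iff in Hy as [x [<- Hx]]. auto.
Qed.

Lemma NoDup_flat_map {A B : Type} (g : A -> list B) (l : list A) : NoDup l ->
  (forall x, In x l -> NoDup (g x)) ->
  (forall x y z, In x l -> In y l -> In z (g x) -> In z (g y) -> x = y) ->
  NoDup (flat_map g l).
Proof.
  induction l as [|x l IH]; intros Hnd Hg Hdisj; [constructor|].
  inversion Hnd as [|? ? Hx Hl]; subst. cbn [flat_map]. apply NoDup_app.
  - auto with datatypes.
  - apply IH; auto with datatypes.
    intros y y' z Hy Hy'. apply Hdisj; auto with datatypes.
  - intros z Hz Hz'. apply in_flat_map in Hz' as [y [Hy Hzy]].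
    assert (x = y) as <- by (apply (Hdisj x y z); auto with datatypes). contradiction.
Qed.

Lemma residue_eq_of_divide k x y : 0 <= x < k -> 0 <= y < k -> (k | x - y) -> x = y.
Proof.
  intros Hx Hy Hxy. apply Z_mod_eq_iff_divide in Hxy; [|lia].
  now rewrite !Z.mod_small in Hxy.
Qed.

Lemma Permutation_residues_shift k : 0 < k ->
  Permutation (map (fun x => (x + 1) mod k) (residues k)) (residues k).
Proof.
  intros Hk. apply Permutation_map_injective_in; [apply NoDup_residues | |].
  - intros x _. apply In_residues, Z.mod_pos_bound, Hk.
  - intros x y Hx Hy Hxy. apply In_residues in Hx, Hy.
    apply Z_mod_eq_iff_divide in Hxy; [|lia].
    apply (residue_eq_of_divide k); auto. now replace (x - y) with (x + 1 - (y + 1)) by ring.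
Qed.

(* Orthogonality: for [k ∤ m] the sum is fixed by multiplication by [e(m/k) <> 1]. *)
Lemma Csum_e_frac_residues k m : 0 < k ->
  Csum (residues k) (fun x => e_frac (x * m) k) =
  if m mod k =? 0 then RtoC (IZR k) else RtoC 0.
Proof.
  intros Hk. destruct (Z.eqb_spec (m mod k) 0) as [Hm|Hm].
  - rewrite (Csum_ext _ _ (fun _ => RtoC 1)).
    + rewrite Csum_const, length_residues, INR_IZR_INZ, Z2Nat.id by lia. C_ring.
    + intros x _. rewrite <- (e_frac_0 k). apply e_frac_congr; [exact Hk|].
      now rewrite Z.mul_mod, Hm, Z.mul_0_r by lia.
  - set (s := Csum (residues k) (fun x => e_frac (x * m) k)).
    assert (Hshift : Cmult (e_frac m k) s = s).
    { unfold s. rewrite Csum_mult_l. symmetry.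
      rewrite <- (Csum_Permutation _ _ _ (Permutation_residues_shift k Hk)), Csum_map.
      apply Csum_ext. intros x _. rewrite <- e_frac_add.
      apply e_frac_congr; [exact Hk|]. rewrite Z.mul_mod_idemp_l by lia. f_equal. ring. }
    assert (Hne : Cminus (e_frac m k) (RtoC 1) <> RtoC 0).
    { intros H0. apply (e_frac_neq_1 m k Hk Hm).
      replace (e_frac m k) with (Cplus (Cminus (e_frac m k) (RtoC 1)) (RtoC 1)) by C_ring.
      rewrite H0. C_ring. }
    replace s with (Cmult (Cinv (Cminus (e_frac m k) (RtoC 1)))
                          (Cminus (Cmult (e_frac m k) s) s)).
    + rewrite Hshift. C_ring.
    + apply C_eq_of_plus_0. field. exact Hne.
Qed.

Lemma Z_gcd_mul_cofactor f u a : 0 <= f -> Z.gcd u a = 1 -> Z.gcd (f * u) (f * a) = f.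
Proof. intros Hf Hu. rewrite Z.gcd_mul_mono_l, Hu. lia. Qed.

Lemma residues_gcd_decomposition k : 1 <= k ->
  Permutation (flat_map (fun f => map (Z.mul f) (reduced_residues (k / f))) (pos_divisors k))
              (residues k).
Proof.
  intros Hk. apply NoDup_Permutation; [| apply NoDup_residues |].
  - apply NoDup_flat_map; [apply NoDup_pos_divisors | |].
    + intros f Hf. apply In_pos_divisors in Hf.
      apply FinFun.Injective_map_NoDup; [intros x y; nia | apply NoDup_reduced_residues].
    + intros f f' x Hf Hf' Hx Hx'. apply In_pos_divisors in Hf, Hf'.
      apply in_map_iff in Hx as [u [<- Hu]], Hx' as [u' [Hx Hu']].
      apply In_reduced_residues in Hu, Hu'.
      rewrite <- (Z_gcd_mul_cofactor f u (k / f)), <- (Z_gcd_mul_cofactor f' u' (k / f'))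
        by (lia || tauto).
      rewrite <- !Zdivide_Zdiv_eq by (lia || tauto). now rewrite Hx.
  - intros x. rewrite in_flat_map, In_residues. split.
    + intros [f [Hf Hx]]. apply In_pos_divisors in Hf as [Hf Hfk].
      apply in_map_iff in Hx as [u [<- Hu]]. apply In_reduced_residues in Hu.
      destruct Hfk as [a ->]. rewrite Z.div_mul in Hu by lia. nia.
    + intros Hx. set (f := Z.gcd x k).
      assert (Hf : 0 < f) by (apply Z_gcd_pos_r; lia).
      assert (Hfx : (f | x)) by apply Z.gcd_divide_l.
      assert (Hfk : (f | k)) by apply Z.gcd_divide_r.
      exists f. split.
      * apply In_pos_divisors.
        split; [split; [lia | apply Z.divide_pos_le; [lia | exact Hfk]] | exact Hfk].
      * apply in_map_iff. exists (x / f). split; [symmetry; apply Zdivide_Zdiv_eq; auto|].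
        apply In_reduced_residues. split; [|apply Z.gcd_div_gcd; auto; lia].
        destruct Hfx as [s Hs], Hfk as [t Ht]. rewrite Hs, Ht, !Z.div_mul by lia. nia.
Qed.

Lemma residues_mul_decomposition a f : 1 <= a -> 1 <= f ->
  Permutation (flat_map (fun r => map (fun j => r + a * j) (residues f)) (residues a))
              (residues (a * f)).
Proof.
  intros Ha Hf. apply NoDup_Permutation; [| apply NoDup_residues |].
  - apply NoDup_flat_map; [apply NoDup_residues | |].
    + intros r _. apply FinFun.Injective_map_NoDup; [intros x y; nia | apply NoDup_residues].
    + intros r r' x Hr Hr' Hx Hx'. apply In_residues in Hr, Hr'.
      apply in_map_iff in Hx as [j [<- _]], Hx' as [j' [Hx _]].
      apply (residue_eq_of_divide a); auto. exists (j' - j). lia.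
  - intros x. rewrite in_flat_map, In_residues. split.
    + intros [r [Hr Hx]]. apply In_residues in Hr.
      apply in_map_iff in Hx as [j [<- Hj]]. apply In_residues in Hj. nia.
    + intros Hx. exists (x mod a). split; [apply In_residues, Z.mod_pos_bound; lia|].
      apply in_map_iff. exists (x / a). split; [rewrite (Z_div_mod_eq_full x a) at 3; ring|].
      apply In_residues. split; [apply Z.div_pos | apply Z.div_lt_upper_bound]; lia.
Qed.

Lemma Csum_residues_mul a f F : 1 <= a -> 1 <= f ->
  Csum (residues (a * f)) F =
  Csum (residues a) (fun r => Csum (residues f) (fun j => F (r + a * j))).
Proof.
  intros Ha Hf. rewrite <- (Csum_Permutation _ _ _ (residues_mul_decomposition a f Ha Hf)).
  rewrite Csum_flat_map. apply Csum_ext. intros r _. apply Csum_map.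
Qed.

Lemma pos_divisors_gcd3 p2 p3 k : 1 <= k ->
  Permutation (filter (fun f => andb (p2 mod f =? 0) (p3 mod f =? 0)) (pos_divisors k))
              (pos_divisors (gcd3 p2 p3 k)).
Proof.
  intros Hk. unfold gcd3.
  assert (Hg : 0 < Z.gcd (Z.gcd p2 p3) k) by (apply Z_gcd_pos_r; lia).
  apply NoDup_Permutation;
    [apply NoDup_filter, NoDup_pos_divisors | apply NoDup_pos_divisors |].
  intros f. rewrite filter_In, !In_pos_divisors, Bool.andb_true_iff, !Z.eqb_eq.
  split.
  - intros [[Hf Hfk] [H2 H3]]. apply Z.mod_divide in H2, H3; [|lia..].
    assert (Hfg : (f | Z.gcd (Z.gcd p2 p3) k)) by now repeat apply Z.gcd_greatest.
    split; [split; [lia | apply Z.divide_pos_le; [lia | assumption]] | exact Hfg].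
  - intros [Hf Hfg].
    assert (Hf23 : (f | Z.gcd p2 p3))
      by (eapply Z.divide_trans; [exact Hfg | apply Z.gcd_divide_l]).
    assert (Hfk : (f | k)) by (eapply Z.divide_trans; [exact Hfg | apply Z.gcd_divide_r]).
    split; [split; [split; [lia | apply Z.divide_pos_le; [lia | assumption]] | exact Hfk]|].
    split; apply Z.mod_divide; try lia; (eapply Z.divide_trans; [exact Hf23|]);
      [apply Z.gcd_divide_l | apply Z.gcd_divide_r].
Qed.

Lemma reduced_residues_mul_opp a al ab : 1 <= a -> (al * ab) mod a = 1 mod a ->
  Permutation (map (fun u => (- (al * u)) mod a) (reduced_residues a)) (reduced_residues a).
Proof.
  intros Ha Hab. apply Z_mod_eq_iff_divide in Hab as [t Ht]; [|lia].
  apply Permutation_map_injective_in; [apply NoDup_reduced_residues | |].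
  - intros u Hu. apply In_reduced_residues in Hu as [_ Hu]. apply In_reduced_residues.
    split; [apply Z.mod_pos_bound; lia|].
    rewrite Z.gcd_mod_l, Z.gcd_opp_l. apply Z_gcd_1_mul; [|exact Hu].
    apply Z_gcd_1_iff_inverse; [exact Ha|]. exists ab.
    apply Z_mod_eq_iff_divide; [lia|]. now exists t.
  - intros u v Hu Hv Huv. apply In_reduced_residues in Hu, Hv.
    apply Z_mod_eq_iff_divide in Huv as [s Hs]; [|lia].
    apply (residue_eq_of_divide a); try tauto.
    exists (- (s * ab) - t * (u - v)).
    replace (u - v) with (- (u - v) * (al * ab - 1) - ab * (- (al * u) - - (al * v))) at 1
      by ring.
    rewrite Hs, Ht. ring.
Qed.

Lemma Z_opp_mod_eqb_0 a b : ((- a) mod b =? 0) = (a mod b =? 0).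
Proof.
  destruct (Z.eqb_spec (a mod b) 0) as [H|H]; [apply Z.eqb_eq | apply Z.eqb_neq].
  - now apply Z_mod_zero_opp_full.
  - intros H'. apply H. rewrite <- (Z.opp_involutive a). now apply Z_mod_zero_opp_full.
Qed.

Lemma A_eq_sum_congruence k al p1 p2 p3 : 1 <= k ->
  A p1 p2 p3 al k =
  Cmult (RtoC (IZR k)) (Csum (residues k) (fun x1 =>
    Cmult (e_frac (- (x1 * p1)) k) (Csum (residues k) (fun x2 =>
      if (al * x1 * x2 - p3) mod k =? 0 then e_frac (- (x2 * p2)) k else C0)))).
Proof.
  intros Hk. rewrite Csum_mult_l. unfold A. apply Csum_ext. intros x1 _.
  rewrite !Csum_mult_l. apply Csum_ext. intros x2 _.
  rewrite (Csum_ext _ _ (fun x3 => Cmult (e_frac (- (x1 * p1) + - (x2 * p2)) k)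
                                         (e_frac (x3 * (al * x1 * x2 - p3)) k))).
  - rewrite <- Csum_mult_l, Csum_e_frac_residues, e_frac_add by lia.
    destruct (_ =? 0); C_ring.
  - intros x3 _. rewrite <- e_frac_add. unfold e_frac. do 3 f_equal. ring.
Qed.

Lemma Csum_e_frac_fiber a f r p : 1 <= a -> 1 <= f ->
  Csum (residues f) (fun j => e_frac (- ((r + a * j) * p)) (a * f)) =
  if p mod f =? 0 then Cmult (RtoC (IZR f)) (e_frac (- (r * p)) (a * f)) else RtoC 0.
Proof.
  intros Ha Hf.
  transitivity (Cmult (e_frac (- (r * p)) (a * f))
                      (Csum (residues f) (fun j => e_frac (j * - p) f))).
  - rewrite Csum_mult_l. apply Csum_ext. intros j _.
    replace (- ((r + a * j) * p)) with (- (r * p) + j * - p * a) by ring.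
    rewrite e_frac_add. f_equal. rewrite (Z.mul_comm a f). apply e_frac_mul_r; lia.
  - rewrite Csum_e_frac_residues, Z_opp_mod_eqb_0 by lia. destruct (_ =? 0); C_ring.
Qed.

Lemma linear_congruence_residue a c w q r : 1 <= a -> (c * w) mod a = 1 mod a ->
  0 <= r < a -> ((c * r - q) mod a = 0 <-> r = (q * w) mod a).
Proof.
  intros Ha Hw Hr. apply Z_mod_eq_iff_divide in Hw as [s Hs]; [|lia].
  rewrite Z.mod_divide by lia. split.
  - intros [t Ht]. rewrite <- (Z.mod_small r a Hr).
    apply Z_mod_eq_iff_divide; [lia|]. exists (- r * s + t * w).
    replace (r - q * w) with (- r * (c * w - 1) + (c * r - q) * w) by ring.
    rewrite Hs, Ht. ring.
  - intros ->. exists (c * - (q * w / a) + q * s).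
    rewrite Z.mod_eq by lia.
    replace (c * (q * w - a * (q * w / a)) - q) with (q * (c * w - 1) - c * a * (q * w / a))
      by ring.
    rewrite Hs. ring.
Qed.

Lemma Csum_congruence_solutions a f c w p2 p3 : 1 <= a -> 1 <= f ->
  (c * w) mod a = 1 mod a ->
  Csum (residues (a * f)) (fun x =>
    if (f * c * x - p3) mod (a * f) =? 0 then e_frac (- (x * p2)) (a * f) else C0) =
  if andb (p2 mod f =? 0) (p3 mod f =? 0)
  then Cmult (RtoC (IZR f)) (e_frac (- (p2 / f * (p3 / f) * w)) a) else C0.
Proof.
  intros Ha Hf Hw. rewrite Csum_residues_mul by assumption.
  rewrite (Csum_ext (residues a) _ (fun r =>
    if (f * c * r - p3) mod (a * f) =? 0
    then if p2 mod f =? 0 then Cmult (RtoC (IZR f)) (e_frac (- (r * p2)) (a * f)) else RtoC 0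
    else C0)).
  2:{ intros r _. rewrite <- Csum_e_frac_fiber by assumption.
      destruct ((f * c * r - p3) mod (a * f) =? 0) eqn:Hr.
      - apply Csum_ext. intros j _. replace (f * c * (r + a * j) - p3)
          with (f * c * r - p3 + c * j * (a * f)) by ring. now rewrite Z.mod_add, Hr by lia.
      - apply Csum_zero. intros j _. replace (f * c * (r + a * j) - p3)
          with (f * c * r - p3 + c * j * (a * f)) by ring. now rewrite Z.mod_add, Hr by lia. }
  destruct (Z.eqb_spec (p2 mod f) 0) as [H2|H2]; cbn [andb].
  2:{ apply Csum_zero. intros r _. destruct (_ =? 0); reflexivity. }
  destruct (Z.eqb_spec (p3 mod f) 0) as [H3|H3].
  2:{ apply Csum_zero. intros r _. destruct (Z.eqb_spec ((f * c * r - p3) mod (a * f)) 0)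
        as [H|]; [|reflexivity].
      exfalso. apply H3, Z.mod_divide; [lia|]. apply Z.mod_divide in H as [t Ht]; [|lia].
      exists (c * r - t * a). lia. }
  apply Z.mod_divide in H2 as [q2 ->], H3 as [q3 ->]; [|lia..]. rewrite !Z.div_mul by lia.
  set (r0 := (q3 * w) mod a).
  rewrite (Csum_ext _ _ (fun r =>
    if r =? r0 then Cmult (RtoC (IZR f)) (e_frac (- (r * q2)) a) else C0)).
  - rewrite Csum_indicator; [| apply NoDup_residues | apply In_residues, Z.mod_pos_bound; lia].
    f_equal. apply e_frac_congr; [lia|]. apply Z_mod_eq_iff_divide; [lia|].
    exists (q2 * (q3 * w / a)). unfold r0. rewrite Z.mod_eq by lia. ring.
  - intros r Hr. apply In_residues in Hr.
    assert (Hcong : (f * c * r - q3 * f) mod (a * f) = 0 <-> r = r0).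
    { unfold r0.
      rewrite <- (linear_congruence_residue a c w q3 r Ha Hw Hr), !Z.mod_divide by lia.
      replace (f * c * r - q3 * f) with ((c * r - q3) * f) by ring.
      apply Z.mul_divide_cancel_r. lia. }
    destruct (Z.eqb_spec ((f * c * r - q3 * f) mod (a * f)) 0), (Z.eqb_spec r r0);
      try tauto.
    replace (- (r * (q2 * f))) with (- (r * q2) * f) by ring. now rewrite e_frac_mul_r by lia.
Qed.

Lemma Csum_reduced_residues_kloosterman a al ab p1 P : 1 <= a -> (al * ab) mod a = 1 mod a ->
  Csum (reduced_residues a) (fun u =>
    Cmult (e_frac (- (u * p1)) a) (e_frac (- (P * invmod (al * u) a)) a)) =
  S (p1 * ab) P a.
Proof.
  intros Ha Hab. unfold S. fold (reduced_residues a).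
  assert (Hal : Z.gcd al a = 1) by (apply Z_gcd_1_iff_inverse; eauto).
  symmetry.
  rewrite <- (Csum_Permutation _ _ _ (reduced_residues_mul_opp a al ab Ha Hab)), Csum_map.
  apply Csum_ext. intros u Hu. apply In_reduced_residues in Hu as [_ Hu].
  set (v := (- (al * u)) mod a). set (w := invmod (al * u) a). set (iv := invmod v a).
  assert (Hw : (al * u * w) mod a = 1 mod a) by (apply invmod_spec; auto using Z_gcd_1_mul).
  assert (Hv : Z.gcd v a = 1)
    by (unfold v; rewrite Z.gcd_mod_l, Z.gcd_opp_l; auto using Z_gcd_1_mul).
  assert (Hiv : (v * iv) mod a = 1 mod a) by (apply invmod_spec; auto).
  assert (Hvu : (a | v + al * u)).
  { exists (- ((- (al * u)) / a)). unfold v. rewrite Z.mod_eq by lia. ring. }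
  rewrite <- e_frac_add. symmetry. apply e_frac_congr; [lia|].
  apply Z_mod_eq_iff_divide; [lia|].
  apply Z_mod_eq_iff_divide in Hab, Hw, Hiv; try lia.
  (* [v = -al u], [iv = 1/v] and [w = 1/(al u)] modulo [a] *)
  replace (- (u * p1) + - (P * w) - (p1 * ab * v + P * iv)) with
    ((v + al * u) * (- p1 * ab - P * iv * w) + (v * iv - 1) * (P * w)
     + (al * u * w - 1) * (P * iv) + (al * ab - 1) * (p1 * u)) by ring.
  repeat apply Z.divide_add_r; now apply Z.divide_mul_l.
Qed.

Lemma A_eq_sum_divisors k al p1 p2 p3 : 1 <= k -> Z.gcd al k = 1 ->
  A p1 p2 p3 al k =
  Cmult (RtoC (IZR k)) (Csum (pos_divisors k) (fun f =>
    if andb (p2 mod f =? 0) (p3 mod f =? 0)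
    then Cmult (RtoC (IZR f)) (Csum (reduced_residues (k / f)) (fun u =>
           Cmult (e_frac (- (u * p1)) (k / f))
                 (e_frac (- (p2 / f * (p3 / f) * invmod (al * u) (k / f))) (k / f))))
    else C0)).
Proof.
  intros Hk Hal. rewrite A_eq_sum_congruence by exact Hk. f_equal.
  rewrite <- (Csum_Permutation _ _ _ (residues_gcd_decomposition k Hk)), Csum_flat_map.
  apply Csum_ext. intros f Hf. apply In_pos_divisors in Hf as [Hf Hfk].
  set (a := k / f).
  assert (Hka : k = a * f) by (unfold a; rewrite Z.mul_comm; now apply Zdivide_Zdiv_eq; [lia|]).
  assert (Ha : 1 <= a) by nia.
  assert (Hala : Z.gcd al a = 1).
  { apply Z.divide_1_r_nonneg; [apply Z.gcd_nonneg|]. rewrite <- Hal.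
    apply Z.gcd_greatest; [apply Z.gcd_divide_l|].
    eapply Z.divide_trans; [apply Z.gcd_divide_r | exists f; lia]. }
  rewrite Csum_map. rewrite Hka.
  rewrite (Csum_ext _ _ (fun u => Cmult (e_frac (- (u * p1)) a)
    (if andb (p2 mod f =? 0) (p3 mod f =? 0)
     then Cmult (RtoC (IZR f)) (e_frac (- (p2 / f * (p3 / f) * invmod (al * u) a)) a)
     else C0))).
  - destruct (andb _ _); [rewrite Csum_mult_l; apply Csum_ext; intros u _; C_ring|].
    apply Csum_zero. intros u _. C_ring.
  - intros u Hu. apply In_reduced_residues in Hu as [_ Hu].
    rewrite <- (Csum_congruence_solutions a f (al * u))
      by (try apply invmod_spec; auto using Z_gcd_1_mul; lia).
    replace (- (f * u * p1)) with (- (u * p1) * f) by ring.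
    rewrite e_frac_mul_r by lia. f_equal. apply Csum_ext. intros x _.
    now replace (al * (f * u) * x - p3) with (f * (al * u) * x - p3) by ring.
Qed.

Lemma Z_div_mul_div_exact a b f : f <> 0 -> (f | a) -> (f | b) ->
  a * b / (f * f) = a / f * (b / f).
Proof.
  intros Hf [s ->] [t ->]. rewrite !Z.div_mul by exact Hf.
  replace (s * f * (t * f)) with (s * t * (f * f)) by ring. apply Z.div_mul. nia.
Qed.

Open Scope R_scope.

Theorem mainTheorem9 (k alpha p1 p2 p3 : Z) (abar : Z -> Z) :
  (1 <= k)%Z ->
  Z.gcd alpha k = 1%Z ->
  (forall f : Z, (0 < f)%Z -> (f | gcd3 p2 p3 k)%Z ->
     ((alpha * abar f) mod (k / f) = 1 mod (k / f))%Z) ->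
  A p1 p2 p3 alpha k =
  Cscale (IZR k)
    (Csum (pos_divisors (gcd3 p2 p3 k))
       (fun f => Cscale (IZR f) (S (p1 * abar f) (p2 * p3 / (f * f)) (k / f)))).
Proof.
  intros Hk Hal Habar.
  rewrite A_eq_sum_divisors, Cscale_RtoC by assumption. f_equal.
  rewrite <- (Csum_Permutation _ _ _ (pos_divisors_gcd3 p2 p3 k Hk)), Csum_filter.
  apply Csum_ext. intros f Hf. apply In_pos_divisors in Hf as [Hf Hfk].
  destruct (andb _ _) eqn:Hdiv; [|reflexivity].
  apply Bool.andb_true_iff in Hdiv as [H2 H3].
  apply Z.eqb_eq, Z.mod_divide in H2, H3; [|lia..].
  assert (Hfg : (f | gcd3 p2 p3 k)%Z) by (now repeat apply Z.gcd_greatest).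
  rewrite Cscale_RtoC, Z_div_mul_div_exact by (assumption || lia). f_equal.
  apply Csum_reduced_residues_kloosterman; [|apply Habar; [lia | exact Hfg]].
  destruct Hfk as [a ->]. rewrite Z.div_mul by lia. nia.
Qed.
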